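(* Let $R$ be a ring. (1) For each $S\in\mathrm{Den}_l(R)$, the poset $(\{S'\in\mathrm{Den}_l(R)\mid S\subseteq S'\},\subseteq)$ has a maximal element. (2) The set $\mathrm{maxDen}_l(R)$ of maximal elements of the poset $(\mathrm{Den}_l(R),\subseteq)$ is non-empty.
   Context: Rings are associative with $1$. A multiplicatively closed subset $S$ ($1\in S$, $0\notin S$, closed under products) is a left Ore set if $Sr\cap Rs\ne\emptyset$ for all $r\in R,s\in S$; it is a left denominator set if moreover $rs=0$ ($r\in R$, $s\in S$) implies $tr=0$ for some $t\in S$. $\mathrm{Den}_l(R)$ is the set of all left denominator sets of $R$. *)

From mathcomp Require Import all_boot all_algebra.
Set Implicit Arguments. Unset Strict Implicit. Unset Printing Implicit Defensive.
Import GRing.Theory.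
Local Open Scope ring_scope.

Definition subset_of (R : Type) (S T : R -> Prop) : Prop := forall x, S x -> T x.

Definition mult_closed (R : nzRingType) (S : R -> Prop) : Prop :=
  S 1 /\ ~ S 0 /\ (forall a b, S a -> S b -> S (a * b)).

Definition left_ore (R : nzRingType) (S : R -> Prop) : Prop :=
  mult_closed S /\
  (forall (r s : R), S s -> exists s' r', S s' /\ s' * r = r' * s).

Definition left_denominator (R : nzRingType) (S : R -> Prop) : Prop :=
  left_ore S /\
  (forall (r s : R), S s -> r * s = 0 -> exists t, S t /\ t * r = 0).

Definition max_left_denominator (R : nzRingType) (T : R -> Prop) : Prop :=
  left_denominator T /\
  (forall T', left_denominator T' -> subset_of T T' -> subset_of T' T).

From mathcomp Require Import all_boot all_algebra.
From mathcomp Require Import boolp classical_sets.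

(* Zorn's lemma: the union of a nonempty chain of left denominator sets is
   again one, since each defining condition involves at most two elements of
   the union, and these lie in a common member of the chain.  Every left
   denominator set contains 1, so a maximal one above [set 1] is maximal in
   Den_l(R). *)

Set Implicit Arguments.
Unset Strict Implicit.
Unset Printing Implicit Defensive.
Import GRing.Theory.
Local Open Scope classical_set_scope.
Local Open Scope ring_scope.

Section LeftDenominatorSets.
Variable R : nzRingType.
Implicit Types (S T X : set R) (F : set (set R)).

Lemma left_denominator1 : left_denominator [set 1 : R].
Proof.
split; [split; [split; [by []|split]|]|].
- by move=> /esym /eqP; rewrite oner_eq0.
- by move=> a b -> ->; rewrite mulr1.
- by move=> r s ->; exists 1, r; rewrite mul1r mulr1.
- by move=> r s -> rs0; exists 1; rewrite mul1r -[r]mulr1.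
Qed.

Lemma mult_closed_bigcup F : F !=set0 -> (forall X, F X -> mult_closed X) ->
  total_on F subset -> mult_closed (\bigcup_(X in F) X).
Proof.
move=> [X0 FX0] Fmc Ftot; split; [|split].
- by exists X0 => //; case: (Fmc X0 FX0).
- by case=> X FX; case: (Fmc X FX) => _ [].
- move=> a b [X FX Xa] [Y FY Yb].
  have [XY|YX] := Ftot X Y FX FY.
  + by exists Y => //; case: (Fmc Y FY) => _ [_ mulY]; apply: mulY (XY a Xa) Yb.
  + by exists X => //; case: (Fmc X FX) => _ [_ mulX]; apply: mulX Xa (YX b Yb).
Qed.

Lemma left_denominator_bigcup F : F !=set0 ->
  (forall X, F X -> left_denominator X) -> total_on F subset ->
  left_denominator (\bigcup_(X in F) X).
Proof.
move=> FN0 Fld Ftot; split; [split|].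
- by apply: mult_closed_bigcup => // X /Fld [[]].
- move=> r s [X FX Xs]; case: (Fld X FX) => [[_ ore] _].
  have [s' [r' [Xs' sr]]] := ore r s Xs.
  by exists s', r'; split=> //; exists X.
- move=> r s [X FX Xs] rs0; case: (Fld X FX) => _ ann.
  have [t [Xt tr0]] := ann r s Xs rs0.
  by exists t; split=> //; exists X.
Qed.

Lemma left_denominator_maximal_over S : left_denominator S ->
  exists T, (left_denominator T /\ S `<=` T) /\
    forall T', left_denominator T' -> T `<=` T' -> T' `<=` T.
Proof.
(* Working with S `|` X rather than X makes the empty chain harmless. *)
move=> ldS; pose P := [set X | left_denominator (S `|` X)].
have Pchain G : G `<=` P -> total_on G subset -> P (\bigcup_(X in G) X).
  move=> GP Gtot; have [GN0|/nonemptyPn ->] := pselect (G !=set0); last first.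
    by rewrite /P /= bigcup_set0 setU0.
  rewrite /P /= -bigcupUr // -(bigcup_image G (setU S) id).
  apply: left_denominator_bigcup; first by case: GN0 => X GX; exists (S `|` X).
    by move=> _ [X GX <-]; exact: GP.
  move=> _ _ [X GX <-] [Y GY <-].
  by have [XY|YX] := Gtot X Y GX GY; [left|right]; exact: setUS.
have [A [PA Amax]] := Zorn_bigcup Pchain.
exists (S `|` A); split=> [|T' ldT' AT']; first by split=> //; exact: subsetUl.
have PT' : P T' by rewrite /P /= (setUidPr _ _).2 //; exact: subset_trans AT'.
have [T'A|nT'A] := pselect (T' `<=` A); first exact: subset_trans (@subsetUr _ _ _).
by exfalso; apply: (Amax T') => //; split=> //; exact: subset_trans AT'.
Qed.

End LeftDenominatorSets.

Theorem lemma3p7 (R : nzRingType) :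
  (forall S : R -> Prop, left_denominator S ->
     exists T : R -> Prop,
       (left_denominator T /\ subset_of S T) /\
       (forall T' : R -> Prop, left_denominator T' -> subset_of S T' ->
          subset_of T T' -> subset_of T' T)) /\
  (exists T : R -> Prop, max_left_denominator T).
Proof.
split=> [S ldS|].
  have [T [ldST Tmax]] := left_denominator_maximal_over ldS.
  by exists T; split=> // T' ldT' _; exact: Tmax.
have [T [[ldT _] Tmax]] := left_denominator_maximal_over (left_denominator1 R).
by exists T.
Qed.
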